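(* Let $N\ge1$ and $0\le m\le r\le n$. Every $L\in\mathcal L^N_{r,m}$ can be written uniquely as $L=\sum_{|J|\le r}p_J\,K_J$ with $p_J\in\mathcal P^N_{r-m}$, and every such sum lies in $\mathcal L^N_{r,m}$; i.e. $\mathcal L^N_{r,m}=\mathcal P^N_{r-m}\otimes\mathcal L^N_{r,r}$. Consequently $$\dim\mathcal L^N_{r,m}=\binom{N+r-m}{r-m}\binom{N+r}{r}.$$
   Context: Variables $x=(x_1,\dots,x_N)$; for a multi-index $I=(i_1,\dots,i_N)\in\mathbb N^N$, $|I|=i_1+\dots+i_N$, $x^I=x_1^{i_1}\cdots x_N^{i_N}$, $D_I=\partial^{|I|}/\partial x_1^{i_1}\cdots\partial x_N^{i_N}$. $\mathcal P^N_s$ is the span of the monomials $x^I$ with $|I|\le s$ (and $\{0\}$ for $s<0$). Euler operator $E=\sum_{i=1}^N x_i\partial/\partial x_i$; Pochhammer operator $(a-E)_k=(-1)^k(E-a)(E-(a-1))\cdots(E-(a-k+1))$. For $|J|\le r$, $K_J=(n-|J|-E)_{r-|J|}D_J$. $\mathcal L^N_{r,m}$ is the real vector space of linear differential operators $\sum_{|I|\le r}a_I(x)D_I$ with polynomial coefficients (order at most $r$) mapping $\mathcal P^N_n$ into $\mathcal P^N_{n-m}$. *)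

From mathcomp Require Import all_boot all_order all_algebra.
From mathcomp Require Export mpoly.
Set Implicit Arguments. Unset Strict Implicit. Unset Printing Implicit Defensive.
Import Order.TTheory GRing.Theory Num.Theory.
Local Open Scope ring_scope.

Section Defs.
Variables (R : realFieldType) (N : nat).

Definition op := {mpoly R[N]} -> {mpoly R[N]}.

(* p \in P^N_s (s >= 0): total degree of p at most s  (msize = 1 + total degree, 0 for p = 0) *)
Definition inP (s : nat) (p : {mpoly R[N]}) : Prop := (msize p <= s.+1)%N.

Definition Dop (I : 'X_{1..N}) (p : {mpoly R[N]}) : {mpoly R[N]} := mderivm I p.

Definition euler (p : {mpoly R[N]}) : {mpoly R[N]} :=
  \sum_(i < N) 'X_i * mderiv i p.

(* Pochhammer operator (a - E)_k = (a - E)(a - 1 - E) ... (a - k + 1 - E)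
   = (-1)^k (E - a)(E - (a-1)) ... (E - (a-k+1)) *)
Fixpoint poch (a k : nat) (p : {mpoly R[N]}) : {mpoly R[N]} :=
  match k with
  | 0 => p
  | k'.+1 => let q := poch a k' p in (a%:R - k'%:R) *: q - euler q
  end.

Definition Kop (n r : nat) (J : 'X_{1..N < r.+1}) (p : {mpoly R[N]}) : {mpoly R[N]} :=
  poch (n - mdeg J) (r - mdeg J) (Dop J p).

Definition is_diffop (r : nat) (L : op) : Prop :=
  exists a : 'X_{1..N < r.+1} -> {mpoly R[N]},
    forall p, L p = \sum_(I : 'X_{1..N < r.+1}) a I * Dop I p.

Definition Lrm (n r m : nat) (L : op) : Prop :=
  is_diffop r L /\ forall p, inP n p -> inP (n - m) (L p).

Definition has_dim (S : op -> Prop) (d : nat) : Prop :=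
  exists b : 'I_d -> op,
    (forall c : 'I_d -> R, S (fun p => \sum_(i < d) c i *: b i p)) /\
    (forall L, S L -> exists! c : 'I_d -> R,
        forall p, L p = \sum_(i < d) c i *: b i p).

End Defs.

From mathcomp Require Import all_boot all_order all_algebra.
From mathcomp Require Import mpoly.
From Stdlib Require Import FunctionalExtensionality.
From mathcomp Require Import ring zify.
Set Implicit Arguments. Unset Strict Implicit. Unset Printing Implicit Defensive.
Import Order.TTheory GRing.Theory Num.Theory.
Local Open Scope ring_scope.

(* Monomials are eigenvectors of E, so K_J maps X^K to c_J(K) X^(K-J), where
   c_J(K) = 0 unless J <= K and c_J(J) <> 0; D_J acts on monomials in the same
   triangular way.  Hence every differential operator of order <= r is a unique
   combination sum_J p_J K_J with polynomial p_J, found by solving degree by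
   degree on the monomials of degree <= r.  Since c_J(K) = 0 when
   n - |K| < r - |J|, each K_J maps P_n into P_(n-r), so coefficients in P_(r-m)
   give an operator in L_(r,m).  Conversely, if some p_J has a monomial X^B of
   degree > r - m, take such a J maximal for the order (|J|, J_1) and apply the
   operator to X^(J + (n-r)e_1): the coefficient of X^(B + (n-r)e_1), a monomial
   of degree > n - m, is c_J(J + (n-r)e_1) p_J[B] <> 0.  For the dimension, a
   multinomial of degree <= k in N variables is a degree-k multinomial in N + 1
   variables. *)

Section Multinomials.
Variable N : nat.
Implicit Types (J K : 'X_{1..N}).

Lemma submm K : (K - K)%MM = 0%MM.
Proof. by apply/mnmP => i; rewrite mnmBE mnm0E subnn. Qed.

Lemma mdeg_subm J K : (J <= K)%MM -> mdeg (K - J) = (mdeg K - mdeg J)%N.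
Proof. by move=> le; rewrite -{2}(submK le) mdegD addnK. Qed.

Lemma lem_mdeg J K : (J <= K)%MM -> (mdeg J <= mdeg K)%N.
Proof. by move=> le; rewrite -(submK le) mdegD leq_addl. Qed.

Lemma lem_mdeg_eq J K : (J <= K)%MM -> mdeg J = mdeg K -> J = K.
Proof.
move=> le e; apply/esym; rewrite -(submK le) -[RHS]add0m; congr (_ + _)%MM.
by apply/eqP; rewrite -mdeg_eq0 mdeg_subm // e subnn.
Qed.

Lemma mnm_le_mdeg K i : (K i <= mdeg K)%N.
Proof. by rewrite mdegE (bigD1 i) //= leq_addr. Qed.

Lemma mdeg_mulUn (i : 'I_N) k : mdeg (U_(i) *+ k)%MM = k.
Proof. by rewrite mdegMn mdeg1 mul1n. Qed.

Lemma lem_addUn J K i k : (J <= K + U_(i) *+ k)%MM -> (J i <= K i)%N -> (J <= K)%MM.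
Proof.
move=> /mnm_lepP le Ji; apply/mnm_lepP => j; case: (eqVneq i j) => [<- //|ne].
by have := le j; rewrite mnmDE mulmnE mnm1E (negbTE ne) mul0n addn0.
Qed.

Definition mffact J K : nat := (\prod_(i < N) (K i) ^_ (J i))%N.

Lemma mffact_eq0 J K : ~~ (J <= K)%MM -> mffact J K = 0%N.
Proof.
rewrite /lem negb_forall => /existsP [i hi].
by rewrite /mffact (bigD1 i) //= ffact_small ?mul0n // ltnNge.
Qed.

Lemma mffact_neq0 J K : (J <= K)%MM -> mffact J K != 0%N.
Proof. by move/mnm_lepP => h; rewrite -lt0n prodn_gt0 // => i; rewrite ffact_gt0. Qed.

End Multinomials.

Section BoundedMultinomials.
Variables (N k : nat).

Definition mnm_init (M : 'X_{1..N.+1}) : 'X_{1..N} := [multinom M (lift ord_max i) | i < N].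

Lemma mdeg_init (M : 'X_{1..N.+1}) : mdeg M = (mdeg (mnm_init M) + M ord_max)%N.
Proof.
rewrite !mdegE big_ord_recr /=; congr (_ + _)%N; apply: eq_bigr => i _.
by rewrite mnmE; congr (M _); apply/val_inj; rewrite /= /bump leqNgt ltn_ord.
Qed.

Definition mnm_homog (M : 'X_{1..N}) : 'X_{1..N.+1} :=
  [multinom (if unlift ord_max i is Some j then M j else (k - mdeg M)%N) | i < N.+1].

Lemma mnm_homogK M : mnm_init (mnm_homog M) = M.
Proof. by apply/mnmP => i; rewrite !mnmE liftK. Qed.

Lemma mdeg_homog M : (mdeg M <= k)%N -> mdeg (mnm_homog M) = k.
Proof. by move=> h; rewrite mdeg_init mnm_homogK mnmE unlift_none; lia. Qed.

Lemma card_bmultinom : #|{: 'X_{1..N < k.+1}}| = 'C(N + k, k).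
Proof.
pose S := [seq s2m t | t : k.-tuple 'I_N.+1 <- enum (basis N.+1 k)].
have degS M : M \in S -> mdeg M = k by move=> MS; apply/eqP; rewrite basis_cover.
have e : perm_eq (map val (enum {: 'X_{1..N < k.+1}})) (map mnm_init S).
  apply: uniq_perm.
  - by rewrite map_inj_uniq ?enum_uniq //; exact: val_inj.
  - rewrite map_inj_in_uniq ?uniq_basis // => M1 M2 /degS d1 /degS d2 e.
    apply/mnmP => i; case: (unliftP ord_max i) => [j -> | ->].
      by have := congr1 (fun M : 'X_{1..N} => M j) e; rewrite /mnm_init !mnmE.
    by move: d1 d2; rewrite !mdeg_init e; lia.
  - move=> M; apply/mapP/mapP => [[y _ ->] | [M' /degS dM' ->]].
    + have := bmdeg y; rewrite ltnS => dy.
      by exists (mnm_homog y); rewrite ?mnm_homogK // -basis_cover mdeg_homog.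
    + have h : (mdeg (mnm_init M') < k.+1)%N by move: dM'; rewrite mdeg_init; lia.
      by exists (BMultinom h); rewrite ?mem_enum.
by rewrite cardE -(size_map val) (perm_size e) size_map size_basis addnC.
Qed.

End BoundedMultinomials.

Section TotalDegree.
Variables (R : realFieldType) (N : nat).
Local Notation mp := {mpoly R[N]}.
Implicit Types (p q : mp).

Lemma inP_msupp s p : inP s p <-> (forall B, B \in msupp p -> (mdeg B <= s)%N).
Proof.
split => [h B /msize_mdeg_lt lt | h]; first by rewrite -ltnS (leq_trans lt h).
by rewrite /inP msizeE; apply/bigmax_leqP_seq => B Bs _; rewrite ltnS h.
Qed.

Lemma inP0 s : inP s (0 : mp).
Proof. by rewrite /inP msize0. Qed.

Lemma inPD s p q : inP s p -> inP s q -> inP s (p + q).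
Proof. by move=> hp hq; rewrite /inP (leq_trans (msizeD_le _ _)) // geq_max hp hq. Qed.

Lemma inP_sum s (I : Type) (l : seq I) (F : I -> mp) :
  (forall i, inP s (F i)) -> inP s (\sum_(i <- l) F i).
Proof. by move=> h; elim/big_ind: _ => //; [exact: inP0 | exact: inPD]. Qed.

Lemma inPZ s c p : inP s p -> inP s (c *: p).
Proof. exact/leq_trans/mmeasureZ_le. Qed.

Lemma inPX s (M : 'X_{1..N}) : (mdeg M <= s)%N -> inP s ('X_[M] : mp).
Proof. by rewrite /inP msizeX ltnS. Qed.

Lemma inPM s t p q : inP s p -> inP t q -> inP (s + t) (p * q).
Proof.
move=> /inP_msupp hp /inP_msupp hq; apply/inP_msupp => B.
by move=> /msuppM_le /allpairsP [[B1 B2] [/= /hp h1 /hq h2 ->]]; rewrite mdegD leq_add.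
Qed.

Lemma mcoeffMXE p (M T : 'X_{1..N}) :
  (p * 'X_[M])@_T = if (M <= T)%MM then p@_(T - M) else 0.
Proof.
case: ifP => [le | nle]; first by rewrite -{1}(submK le) addmC mcoeffMX.
apply: memN_msupp_eq0; rewrite (perm_mem (msuppMX _ _)); apply/negP => /mapP [M' _ e].
by move: nle; rewrite e lem_addr.
Qed.

Lemma mcoeff_bmnm_comb s (c : 'X_{1..N < s} -> R) (B : 'X_{1..N < s}) :
  (\sum_(B' : 'X_{1..N < s}) c B' *: ('X_[B'] : mp))@_B = c B.
Proof.
rewrite raddf_sum (bigD1 B) //= mcoeffZ mcoeffX eqxx mulr1 big1 ?addr0 // => B' nB.
by rewrite mcoeffZ mcoeffX inj_eq ?(negbTE nB) ?mulr0 //; exact: val_inj.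
Qed.

End TotalDegree.

Section EulerPochhammer.
Variables (R : realFieldType) (N : nat).
Local Notation mp := {mpoly R[N]}.
Implicit Types (p q : mp).

Lemma eulerD p q : euler (p + q) = euler p + euler q.
Proof. by rewrite /euler -big_split; apply: eq_bigr => i _; rewrite mderivD mulrDr. Qed.

Lemma eulerZ c p : euler (c *: p) = c *: euler p.
Proof. by rewrite /euler scaler_sumr; apply: eq_bigr => i _; rewrite mderivZ scalerAr. Qed.

Lemma eulerX (M : 'X_{1..N}) : euler 'X_[M] = (mdeg M)%:R *: ('X_[M] : mp).
Proof.
rewrite /euler mdegE natr_sum scaler_suml; apply: eq_bigr => i _.
rewrite mderivX -scalerAr; have [->|nz] := eqVneq (M i) 0%N; first by rewrite !scale0r.
by rewrite -mpolyXD addmC submK // lep1mP.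
Qed.

Lemma pochD a k p q : poch a k (p + q) = poch a k p + poch a k q.
Proof. by elim: k => [//|k IH] /=; rewrite IH eulerD scalerDr opprD addrACA. Qed.

Lemma pochZ a k c p : poch a k (c *: p) = c *: poch a k p.
Proof. by elim: k => [//|k IH] /=; rewrite IH eulerZ scalerBr !scalerA mulrC. Qed.

Lemma poch_eigen a k (d : R) p : euler p = d *: p ->
  poch a k p = (\prod_(j < k) (a%:R - j%:R - d)) *: p.
Proof.
move=> Ep; elim: k => [|k IH] /=; first by rewrite big_ord0 scale1r.
rewrite IH eulerZ Ep big_ord_recr /= !scalerA -scalerBl; congr (_ *: _); ring.
Qed.

End EulerPochhammer.

Section Kop.
Variables (R : realFieldType) (N n r : nat).
Local Notation mp := {mpoly R[N]}.
Local Notation BM := 'X_{1..N < r.+1}.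
Implicit Types (J : BM) (K : 'X_{1..N}) (q : mp).

Lemma KopD J q q' : Kop n J (q + q') = Kop n J q + Kop n J q'.
Proof. by rewrite /Kop /Dop mderivmD pochD. Qed.

Lemma KopZ J c q : Kop n J (c *: q) = c *: Kop n J q.
Proof. by rewrite /Kop /Dop mderivmZ pochZ. Qed.

Lemma Kop_sum J (I : Type) (l : seq I) (F : I -> mp) :
  Kop n J (\sum_(i <- l) F i) = \sum_(i <- l) Kop n J (F i).
Proof.
by apply: (big_morph _ (KopD J)); rewrite -(scale0r (0 : mp)) KopZ !scale0r.
Qed.

Definition Kcoef J K : R :=
  (\prod_(j < r - mdeg J) ((n - mdeg J)%:R - j%:R - (mdeg (K - J))%:R)) * (mffact J K)%:R.

Lemma Kop_X J K : Kop n J 'X_[K] = Kcoef J K *: ('X_[K - J] : mp).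
Proof.
rewrite /Kop /Dop mderivmX pochZ (@poch_eigen _ _ _ _ (mdeg (K - J))%:R) ?eulerX //.
by rewrite scalerA mulrC.
Qed.

Lemma Kcoef_nle J K : ~~ (J <= K)%MM -> Kcoef J K = 0.
Proof. by move=> h; rewrite /Kcoef mffact_eq0 // mulr0. Qed.

(* The factor j = n - |K| of the Pochhammer product is (n - |J|) - (n - |K|) - |K - J| = 0. *)
Lemma Kcoef_gap J K : (mdeg K <= n)%N -> (n - mdeg K < r - mdeg J)%N -> Kcoef J K = 0.
Proof.
move=> Kn gap; have [le|] := boolP (J <= K)%MM; last exact: Kcoef_nle.
rewrite /Kcoef (bigD1 (Ordinal gap)) //= -!mulrA.
have -> : (n - mdeg J = n - mdeg K + mdeg (K - J))%N.
  by rewrite mdeg_subm //; have := lem_mdeg le; lia.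
by rewrite natrD addrAC addrK subrr mul0r.
Qed.

Lemma Kcoef_neq0 J K : (J <= K)%MM -> (r - mdeg J <= n - mdeg K)%N -> Kcoef J K != 0.
Proof.
move=> le nogap; have JK := lem_mdeg le.
rewrite mulf_neq0 ?pnatr_eq0 ?mffact_neq0 // prodf_seq_neq0.
apply/allP => j _ /=; have := ltn_ord j; rewrite mdeg_subm // => jlt.
have -> : (n - mdeg J = (n - mdeg K - j) + (j + (mdeg K - mdeg J)))%N by lia.
by rewrite natrD -addrA -opprD -(natrD R j) addrK pnatr_eq0; lia.
Qed.

End Kop.

Arguments Kcoef R {N} n {r} J K.

Section DifferentialOperators.
Variables (R : realFieldType) (N : nat).
Local Notation mp := {mpoly R[N]}.

(* Unlike [is_diffop], this presentation allows repeated multi-indices, which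
   makes closure under sums and under composition with derivations immediate. *)
Definition diffop_seq (s : nat) (T : op R N) := exists l : seq ('X_{1..N} * mp),
  all (fun x => (mdeg x.1 <= s)%N) l /\ forall q, T q = \sum_(x <- l) x.2 * Dop x.1 q.

Lemma diffop_seq_ext s (T T' : op R N) : T =1 T' -> diffop_seq s T -> diffop_seq s T'.
Proof. by move=> e [l [h1 h2]]; exists l; split => // q; rewrite -e. Qed.

Lemma diffop_seq_mono s s' T : (s <= s')%N -> diffop_seq s T -> diffop_seq s' T.
Proof.
move=> le [l [h1 h2]]; exists l; split => //.
by apply/allP => x /(allP h1) /= h; apply: leq_trans le.
Qed.

Lemma diffop_seq_Dop s J : (mdeg J <= s)%N -> diffop_seq s (Dop J).
Proof. by move=> h; exists [:: (J, 1)]; rewrite /= h; split => // q; rewrite big_seq1 mul1r. Qed.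

Lemma diffop_seq_add s T1 T2 :
  diffop_seq s T1 -> diffop_seq s T2 -> diffop_seq s (fun q => T1 q + T2 q).
Proof.
move=> [l1 [a1 b1]] [l2 [a2 b2]]; exists (l1 ++ l2); rewrite all_cat a1 a2.
by split => // q; rewrite big_cat b1 b2.
Qed.

Lemma diffop_seq_mull s a T : diffop_seq s T -> diffop_seq s (fun q => a * T q).
Proof.
move=> [l [h1 h2]]; exists [seq (x.1, a * x.2) | x <- l]; split.
  by rewrite all_map; apply/allP => x /(allP h1).
by move=> q; rewrite big_map h2 mulr_sumr; apply: eq_bigr => x _; rewrite mulrA.
Qed.

Lemma diffop_seq_sum s (I : eqType) (l : seq I) (T : I -> op R N) :
  (forall i, i \in l -> diffop_seq s (T i)) -> diffop_seq s (fun q => \sum_(i <- l) T i q).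
Proof.
elim: l => [|i l IH] h; first by exists [::]; split => // q; rewrite !big_nil.
apply: diffop_seq_ext (diffop_seq_add (h i (mem_head _ _)) (IH _)) => [q|j jl].
  by rewrite big_cons.
by apply: h; rewrite in_cons jl orbT.
Qed.

Lemma diffop_seq_mderiv s i T :
  diffop_seq s T -> diffop_seq s.+1 (fun q => mderiv i (T q)).
Proof.
move=> [l [h1 h2]].
pose T' q := \sum_(x <- l) (mderiv i x.2 * Dop x.1 q + x.2 * Dop (x.1 + U_(i))%MM q).
apply: (diffop_seq_ext (T := T')) => [q|].
  rewrite h2 raddf_sum /=; apply: eq_bigr => x _.
  by rewrite mderivM /Dop mderivmDm mderivmU1m.
apply: diffop_seq_sum => x /(allP h1) /= xs.
by apply: diffop_seq_add; apply: diffop_seq_mull; apply: diffop_seq_Dop;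
  rewrite ?mdegD ?mdeg1 ?addn1 ?ltnS // leqW.
Qed.

Lemma diffop_seq_euler s T : diffop_seq s T -> diffop_seq s.+1 (fun q => euler (T q)).
Proof.
by move=> h; apply: diffop_seq_sum => i _; apply: diffop_seq_mull; apply: diffop_seq_mderiv.
Qed.

Lemma diffop_seq_poch (J : 'X_{1..N}) a k :
  diffop_seq (mdeg J + k) (fun q => poch a k (Dop J q)).
Proof.
elim: k => [|k IH] /=; first by rewrite addn0; apply: diffop_seq_Dop.
pose T : op R N := fun q =>
  (a%:R - k%:R)%:MP * poch a k (Dop J q) + (-1)%:MP * euler (poch a k (Dop J q)).
apply: (diffop_seq_ext (T := T)) => [q|]; first by rewrite /T !mul_mpolyC scaleN1r.
rewrite addnS; apply: diffop_seq_add; apply: diffop_seq_mull; last exact: diffop_seq_euler.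
exact: diffop_seq_mono IH.
Qed.

Lemma diffop_seq_Kop n r (J : 'X_{1..N < r.+1}) : diffop_seq r (Kop n J).
Proof.
have := diffop_seq_poch J (n - mdeg J) (r - mdeg J).
by rewrite subnKC //; have := bmdeg J.
Qed.

Lemma diffop_seq_is_diffop r T : diffop_seq r T -> is_diffop r T.
Proof.
move=> [l [h1 h2]].
exists (fun I : 'X_{1..N < r.+1} => \sum_(x <- l | x.1 == val I) x.2) => q.
rewrite h2; apply/esym; under eq_bigr do rewrite mulr_suml big_mkcond.
rewrite exchange_big /= big_seq [RHS]big_seq; apply: eq_bigr => x xl.
have dx : (mdeg x.1 < r.+1)%N by rewrite ltnS; apply: (allP h1).
rewrite (bigD1 (BMultinom dx)) //= eqxx big1 ?addr0 // => I nI.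
by case: eqP => // e; case/eqP: nI; apply/val_inj; rewrite /= e.
Qed.

End DifferentialOperators.

Section Representation.
Variables (R : realFieldType) (N n r : nat).
Hypothesis rn : (r <= n)%N.
Local Notation mp := {mpoly R[N]}.
Local Notation BM := 'X_{1..N < r.+1}.

Lemma triangular_comb_eq0 (b : BM -> mp) (c : BM -> 'X_{1..N} -> R) :
  (forall K : BM, \sum_J b J * (c J K *: 'X_[K - J]) = 0) ->
  (forall (J : BM) K, ~~ (J <= K)%MM -> c J K = 0) ->
  (forall K : BM, c K K != 0) -> forall J, b J = 0.
Proof.
move=> comb0 c0 cK; suff h t (J : BM) : (mdeg J < t)%N -> b J = 0.
  by move=> J; apply: (h (mdeg J).+1).
elim: t J => [//|t IH] J; rewrite ltnS leq_eqVlt => /orP [/eqP dJ|]; last exact: IH.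
have := comb0 J; rewrite (bigD1 J) //= big1 => [|K nKJ].
  rewrite addr0 submm mpolyX0 -scalerAr mulr1 => /eqP.
  by rewrite scaler_eq0 (negbTE (cK J)) => /eqP.
have [lt|] := ltnP (mdeg K) t; first by rewrite IH // mul0r.
rewrite -dJ => ge; rewrite c0 ?scale0r ?mulr0 //; apply/negP => le.
by move/eqP: nKJ; apply; apply/val_inj/lem_mdeg_eq => //; apply/anti_leq; rewrite ge lem_mdeg.
Qed.

Definition Ksum (p : BM -> mp) : op R N := fun q => \sum_(J : BM) p J * Kop n J q.

Lemma KsumD p p' q : Ksum (fun J => p J + p' J) q = Ksum p q + Ksum p' q.
Proof. by rewrite /Ksum -big_split; apply: eq_bigr => J _; rewrite mulrDl. Qed.

Lemma diffop_seq_Ksum p : diffop_seq r (Ksum p).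
Proof. by apply: diffop_seq_sum => J _; apply: diffop_seq_mull; apply: diffop_seq_Kop. Qed.

Lemma Kcoef_diag (J : BM) : Kcoef R n J J != 0.
Proof. by apply: Kcoef_neq0; rewrite ?lepm_refl //; lia. Qed.

Lemma Ksum_inj p p' : Ksum p =1 Ksum p' -> p =1 p'.
Proof.
move=> e J; apply/eqP; rewrite -subr_eq0; apply/eqP; move: J.
apply: (triangular_comb_eq0 (b := fun J => p J - p' J) (c := Kcoef R n)) => [K||]; last 2 first.
- exact: Kcoef_nle.
- exact: Kcoef_diag.
transitivity (Ksum p 'X_[K] - Ksum p' 'X_[K]); last by rewrite e subrr.
by rewrite /Ksum -sumrB; apply: eq_bigr => J _; rewrite mulrBl Kop_X.
Qed.

Lemma diffop_eq_monomials (L L' : op R N) : is_diffop r L -> is_diffop r L' ->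
  (forall K : BM, L 'X_[K] = L' 'X_[K]) -> L =1 L'.
Proof.
move=> [a La] [a' La'] e q; rewrite La La'; apply: eq_bigr => I _; congr (_ * _).
apply/eqP; rewrite -subr_eq0; apply/eqP; move: I.
apply: (triangular_comb_eq0 (b := fun I => a I - a' I) (c := fun I K => (mffact I K)%:R)) => [K||K].
- transitivity (L 'X_[K] - L' 'X_[K]); last by rewrite e subrr.
  by rewrite La La' -sumrB; apply: eq_bigr => J _; rewrite mulrBl /Dop mderivmX.
- by move=> J K h; rewrite mffact_eq0.
- by rewrite pnatr_eq0 mffact_neq0 // lepm_refl.
Qed.

Lemma Ksum_X_top p (K : BM) :
  (forall J : BM, J != K -> p J != 0 -> (mdeg K <= mdeg J)%N) ->
  Ksum p 'X_[K] = Kcoef R n K K *: p K.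
Proof.
move=> top; rewrite /Ksum (bigD1 K) //= Kop_X submm mpolyX0 -scalerAr mulr1.
rewrite big1 ?addr0 // => J nJK; have [->|nzJ] := eqVneq (p J) 0; first by rewrite mul0r.
have KJ := top J nJK nzJ; rewrite Kop_X Kcoef_nle ?scale0r ?mulr0 //.
apply: contra nJK => le; apply/eqP/val_inj/lem_mdeg_eq => //.
by apply/anti_leq; rewrite lem_mdeg.
Qed.

Lemma Ksum_interpolate (L : op R N) t :
  exists p, forall K : BM, (mdeg K < t)%N -> L 'X_[K] = Ksum p 'X_[K].
Proof.
elim: t => [|t [p Lp]]; first by exists (fun _ => 0).
pose d (J : BM) := if mdeg J == t then (Kcoef R n J J)^-1 *: (L 'X_[J] - Ksum p 'X_[J]) else 0.
have top (K : BM) : (mdeg K <= t)%N -> Ksum d 'X_[K] = Kcoef R n K K *: d K.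
  move=> Kt; apply: Ksum_X_top => J _; rewrite /d.
  by case: (mdeg J =P t) => [-> | _]; rewrite ?eqxx.
exists (fun J => p J + d J) => K; rewrite ltnS KsumD => Kt; rewrite top // /d.
move: Kt; rewrite leq_eqVlt => /orP [/eqP -> | lt]; last by rewrite ltn_eqF // scaler0 addr0 Lp.
by rewrite eqxx scalerA mulfV ?Kcoef_diag // scale1r addrC subrK.
Qed.

Lemma diffop_Ksum (L : op R N) : is_diffop r L -> exists p, L =1 Ksum p.
Proof.
move=> dL; have [p Lp] := Ksum_interpolate L r.+1; exists p.
apply: diffop_eq_monomials => // [|K]; first exact/diffop_seq_is_diffop/diffop_seq_Ksum.
by apply: Lp; apply: bmdeg.
Qed.

End Representation.

Section Degrees.
Variables (R : realFieldType) (N n r : nat).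
Hypothesis rn : (r <= n)%N.
Local Notation mp := {mpoly R[N]}.
Local Notation BM := 'X_{1..N < r.+1}.

Lemma Kop_inP (J : BM) (q : mp) : inP n q -> inP (n - r) (Kop n J q).
Proof.
move=> hq; rewrite (mpolywE hq) Kop_sum; apply: inP_sum => M; rewrite KopZ Kop_X.
have [->|nz] := eqVneq (Kcoef R n J M) 0; first by rewrite !scale0r scaler0; exact: inP0.
have le : (J <= M)%MM by apply: contraTT nz => /Kcoef_nle ->; rewrite eqxx.
have : ~~ (n - mdeg M < r - mdeg J)%N.
  by apply: contra nz => /Kcoef_gap -> //; rewrite -ltnS bmdeg.
have := bmdeg M; have := bmdeg J; rewrite !ltnS => dJ dM gap.
by apply/inPZ/inPZ/inPX; rewrite mdeg_subm //; lia.
Qed.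

Lemma Ksum_Lrm m (p : BM -> mp) : (m <= r)%N ->
  (forall J, inP (r - m) (p J)) -> Lrm n r m (Ksum n p).
Proof.
move=> mr hp; split; first exact/diffop_seq_is_diffop/diffop_seq_Ksum.
move=> q hq; apply: inP_sum => J; have -> : (n - m = (r - m) + (n - r))%N by lia.
by apply: inPM => //; apply: Kop_inP.
Qed.

Variable i0 : 'I_N.
Local Notation shift K := (K + U_(i0) *+ (n - r))%MM.

(* Orders the multi-indices of degree <= r lexicographically by (|J|, J i0). *)
Definition Kweight (J : BM) : nat := (r.+1 * mdeg J + J i0)%N.

Lemma Kweight_lt (J J0 : BM) :
  (J <= shift J0)%MM -> (mdeg J0 <= mdeg J)%N -> J != J0 -> (Kweight J0 < Kweight J)%N.
Proof.
move=> le ge nJ; have := mnm_le_mdeg J0 i0; have := bmdeg J0.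
rewrite /Kweight ltnS => J0r J0i.
have [gt|le'] := ltnP (mdeg J0) (mdeg J).
  have : (r.+1 * (mdeg J0).+1 <= r.+1 * mdeg J)%N by rewrite leq_mul2l gt orbT.
  nia.
have eqd : mdeg J = mdeg J0 by apply/eqP; rewrite eqn_leq le' ge.
rewrite eqd ltn_add2l ltnNge; apply: contra nJ => Ji.
by apply/eqP/val_inj/lem_mdeg_eq => //; exact: lem_addUn le Ji.
Qed.

Lemma Kcoef_shift_neq0 (J0 : BM) : Kcoef R n J0 (shift J0) != 0.
Proof. by apply: Kcoef_neq0; rewrite ?lem_addr // mdegD mdeg_mulUn; lia. Qed.

Lemma mcoeff_Kop_shift_diag (a : mp) (J0 : BM) B :
  (a * Kop n J0 'X_[shift J0])@_(shift B) = Kcoef R n J0 (shift J0) * a@_B.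
Proof. by rewrite Kop_X -scalerAr mcoeffZ mcoeffMXE addmC addmK lem_addl addmK. Qed.

Lemma mcoeff_Kop_shift (a : mp) (J J0 : BM) B : J != J0 ->
  (a * Kop n J 'X_[shift J0])@_(shift B) != 0 ->
  (Kweight J0 < Kweight J)%N /\ exists2 B', B' \in msupp a & (mdeg B <= mdeg B')%N.
Proof.
rewrite Kop_X -scalerAr mcoeffZ mcoeffMXE mulf_eq0 negb_or => nJ /andP [nzK].
have le : (J <= shift J0)%MM by apply: contraTT nzK => /Kcoef_nle ->; rewrite eqxx.
have dI : mdeg (shift J0) = (mdeg J0 + (n - r))%N by rewrite mdegD mdeg_mulUn.
have : ~~ (n - mdeg (shift J0) < r - mdeg J)%N.
  by apply: contra nzK => /Kcoef_gap -> //; rewrite dI; have := bmdeg J0; lia.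
have := bmdeg J0; have := bmdeg J; rewrite dI !ltnS => dJ dJ0 gap.
have ge : (mdeg J0 <= mdeg J)%N by lia.
case: ifP => [le' | _]; last by rewrite eqxx.
rewrite -mcoeff_msupp => B's; split; first exact: Kweight_lt.
exists (shift B - (shift J0 - J))%MM => //.
by rewrite !mdeg_subm // !mdegD mdeg_mulUn; lia.
Qed.

Lemma Ksum_coef_inP m (p : BM -> mp) :
  (forall q, inP n q -> inP (n - m) (Ksum n p q)) -> forall J, inP (r - m) (p J).
Proof.
move=> Lp; pose high J := has (fun B => r - m < mdeg B)%N (msupp (p J)).
suff nh J : ~~ high J.
  move=> J; apply/inP_msupp => B Bs; rewrite leqNgt; apply: contra (nh J) => lt.
  by apply/hasP; exists B.
apply/negP => hJ; have [J0 hJ0 maxJ0] := arg_maxnP Kweight hJ.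
have [B0 B0s B0d] := hasP hJ0.
have dI : (mdeg (shift J0) <= n)%N by rewrite mdegD mdeg_mulUn; have := bmdeg J0; lia.
move: (Lp _ (inPX R dI)) => /inP_msupp /(_ (shift B0)).
suff nz : (Ksum n p 'X_[shift J0])@_(shift B0) != 0.
  by rewrite mcoeff_msupp nz mdegD mdeg_mulUn => /(_ isT); lia.
rewrite /Ksum raddf_sum (bigD1 J0) //= big1 ?addr0.
  by rewrite mcoeff_Kop_shift_diag mulf_neq0 ?Kcoef_shift_neq0 -?mcoeff_msupp.
move=> J' nJ; apply/eqP/negP => /negP /(mcoeff_Kop_shift nJ) [lt [B Bs BB0]].
have : high J' by apply/hasP; exists B => //; apply: leq_trans BB0.
by move/maxJ0; rewrite /= leqNgt lt.
Qed.

End Degrees.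

Section Dimension.
Variables (R : realFieldType) (N : nat).
Local Notation mp := {mpoly R[N]}.

Lemma has_dim_card (T : finType) (S : op R N -> Prop) (b : T -> op R N) :
  (forall c : T -> R, S (fun q => \sum_t c t *: b t q)) ->
  (forall L, S L -> exists! c : T -> R, forall q, L q = \sum_t c t *: b t q) ->
  has_dim S #|{: T}|.
Proof.
move=> Sb Su; exists (fun i => b (enum_val i)).
have sumE (c : T -> R) q :
    \sum_(i < #|T|) c (enum_val i) *: b (enum_val i) q = \sum_t c t *: b t q.
  rewrite (reindex (@enum_rank T)) /=; last first.
    by exists enum_val => t _; rewrite ?enum_valK ?enum_rankK.
  by apply: eq_bigr => t _; rewrite enum_rankK.
split => [c | L /Su [c [Lc cu]]].
  have -> : (fun q => \sum_(i < #|T|) c i *: b (enum_val i) q) =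
            (fun q => \sum_t c (enum_rank t) *: b t q).
    apply: functional_extensionality => q; rewrite -sumE.
    by apply: eq_bigr => i _; rewrite enum_valK.
  exact: Sb.
exists (fun i => c (enum_val i)); split => [q | c' Lc']; first by rewrite Lc sumE.
have cE : c = (fun t => c' (enum_rank t)).
  apply: cu => q; rewrite Lc' -sumE.
  by apply: eq_bigr => i _; rewrite enum_valK.
by apply: functional_extensionality => i; rewrite cE enum_valK.
Qed.

Lemma Lrm_Ksum_unique n r m (L : op R N) : (1 <= N)%N -> (r <= n)%N -> Lrm n r m L ->
  exists! p : 'X_{1..N < r.+1} -> mp, (forall J, inP (r - m) (p J)) /\ L =1 Ksum n p.
Proof.
move=> N1 rn [dL Lb]; have [p Lp] := diffop_Ksum rn dL; exists p; split.
  split=> //; apply: (Ksum_coef_inP rn (Ordinal N1)) => q hq; rewrite -Lp; exact: Lb.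
move=> p' [_ Lp']; apply: functional_extensionality; apply: (Ksum_inj rn) => q.
by rewrite -Lp.
Qed.

Lemma has_dim_Lrm n r m : (1 <= N)%N -> (m <= r)%N -> (r <= n)%N ->
  has_dim (Lrm (R := R) (N := N) n r m) #|{: 'X_{1..N < (r - m).+1} * 'X_{1..N < r.+1}}|.
Proof.
move=> N1 mr rn.
pose T := ('X_{1..N < (r - m).+1} * 'X_{1..N < r.+1})%type.
pose pc (c : T -> R) J := \sum_(B : 'X_{1..N < (r - m).+1}) c (B, J) *: ('X_[B] : mp).
have pc_inP c J : inP (r - m) (pc c J).
  by apply: inP_sum => B; apply/inPZ/inPX; rewrite -ltnS bmdeg.
have sumE c q : \sum_(t : T) c t *: ('X_[t.1] * Kop n t.2 q) = Ksum n (pc c) q.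
  rewrite /Ksum /pc; under [RHS]eq_bigr do rewrite mulr_suml.
  rewrite exchange_big pair_big /=; apply: eq_big => [[B J] | [B J] _] //=.
  by rewrite scalerAl.
apply: (has_dim_card (b := fun (t : T) q => 'X_[t.1] * Kop n t.2 q)) => [c | L HL].
  have -> : (fun q => \sum_(t : T) c t *: ('X_[t.1] * Kop n t.2 q)) = Ksum n (pc c).
    by apply: functional_extensionality => q; exact: sumE.
  exact: Ksum_Lrm.
have [p [[p_inP Lp] p_uniq]] := Lrm_Ksum_unique N1 rn HL.
have pcE : pc (fun t : T => (p t.2)@_t.1) = p.
  by apply: functional_extensionality => J; rewrite [RHS](mpolywE (p_inP J)).
exists (fun t : T => (p t.2)@_t.1); split => [q | c Lc]; first by rewrite sumE pcE Lp.
have -> : p = pc c by apply: p_uniq; split => // q; rewrite Lc sumE.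
by apply: functional_extensionality => -[B J]; rewrite mcoeff_bmnm_comb.
Qed.

End Dimension.

Theorem mainTheorem19 (R : realFieldType) (N n r m : nat) :
  (1 <= N)%N -> (m <= r)%N -> (r <= n)%N ->
  (forall L : op R N, Lrm n r m L ->
     exists! p : 'X_{1..N < r.+1} -> {mpoly R[N]},
       (forall J, inP (r - m) (p J)) /\
       (forall q, L q = \sum_(J : 'X_{1..N < r.+1}) p J * Kop n J q)) /\
  (forall p : 'X_{1..N < r.+1} -> {mpoly R[N]},
     (forall J, inP (r - m) (p J)) ->
     Lrm n r m (fun q => \sum_(J : 'X_{1..N < r.+1}) p J * Kop n J q)) /\
  has_dim (Lrm (N := N) (R := R) n r m) ('C(N + r - m, r - m) * 'C(N + r, r))%N.
Proof.
move=> N1 mr rn; split; first by move=> L; exact: Lrm_Ksum_unique.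
split; first by move=> p; exact: Ksum_Lrm.
by rewrite -addnBA // -!card_bmultinom -card_prod; exact: has_dim_Lrm.
Qed.
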